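(* Let $R$ be a schematic semi-graded ring and $J$ a compatible semi-graded ideal of $R$. Let $\mathcal{C}\text{-}R$ (resp. $\mathcal{C}\text{-}R/J$) be the full subcategory of $\mathsf{LSG}\text{-}R$ (resp. $\mathsf{LSG}\text{-}R/J$) consisting of the $T$-closed modules. Let $i_*:\mathcal{C}\text{-}R/J\to\mathcal{C}\text{-}R$ be the restriction of $Q f_*$ and $i^!:\mathcal{C}\text{-}R\to\mathcal{C}\text{-}R/J$ the restriction of $f^!$. Then $i_*$ is left adjoint to $i^!$, and $i_*$ is fully faithful.
   Context: Rings are associative with $1$; modules are left modules. A ring $R$ is semi-graded (SG) if there are additive subgroups $R_n$ ($n\in\mathbb{Z}$) with $R=\bigoplus_n R_n$, $R_mR_n\subseteq\bigoplus_{k\le m+n}R_k$, and $1\in R_0$; positively SG if $R_n=0$ for $n<0$. An $R$-module $M$ is SG if $M=\bigoplus_nM_n$ with $R_mM_n\subseteq\bigoplus_{k\le m+n}M_k$ for $m\ge0$; homomorphisms are homogeneous if they preserve degrees; SG submodules are submodules $N$ with $N=\bigoplus(N\cap M_n)$. An SG ideal $J$ is a two-sided ideal that is an SG submodule of $R$; $R/J$ is SG with $(R/J)_n=(R_n+J)/J$, $f:R\to R/J$ canonical. Let $R'_n=\{r\in R_n: rh\in R_{n+m}\ \forall m,\forall h\in R_m\}$, $R''_n=\{r\in R'_n: hr\in R_{n+m}\ \forall m,\forall h\in R_m\}$, $R'=\bigcup R'_n$, $R''=\bigcup R''_n$ (similarly for $R/J$). $M$ is LSG if $R'_nM_m\subseteq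 M_{n+m}$; $\mathsf{LSG}\text{-}R$ is the category of LSG modules and homogeneous homomorphisms. $J$ is compatible if the image of $R'$ in $R/J$ is $(R/J)'$. A left Ore set $S$ is good if $S\subseteq R''$ and for $s\in S,r\in R'$ there are $u\in R'$, $v\in S$ with $us=vr$. $R_{\ge t}$ is the intersection of all SG ideals containing $\bigoplus_{k\ge t}R_k$. $m\in M$ is torsion if $(R_{\ge t})^nm=0$ for some $n,t\ge0$; $T(M)$ is the torsion submodule. $R$ is schematic if it is positively SG, left Noetherian, and there is a finite set $I$ of good left Ore sets $S$ with $S\cap\bigoplus_{k\ge1}R_k\ne\emptyset$ such that for each $(x_S)\in\prod_{S\in I}S$ there are $t,m$ with $(R_{\ge t})^m\subseteq\sum_SRx_S$. An LSG module $E$ is $T$-closed if for every LSG $M$, SG submodule $N$ with $M/N$ torsion, every homogeneous $N\to E$ extends uniquely to a homogeneous $M\to E$. For an LSG $R$-module $M$, $Q(M)$ is its module of quotients (the $T$-closed module containing $M/T(M)$ with torsion quotient), an LSG module where $\xi$ is homogeneous of degree $k$ iff for some $n,t$, $(R_{\ge n})^t\xi\subseteq M/T(M)$ and $s\xi$ has degree $k+\deg s$ for all homogeneous $s\in(R_{\ge n})^t\cap R'$. $f_*$ is restriction of scalars along $f$; $f^!(N)$ is the largest SG submodule of $N$ annihilated by $J$, an $R/J$-module via $\overline rm=rm$, on morphisms given by restriction. *)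

From HB Require Import structures.
From mathcomp Require Import all_boot all_order all_algebra.
From Stdlib Require Import ClassicalEpsilon.

Set Implicit Arguments.
Unset Strict Implicit.
Unset Printing Implicit Defensive.

Import Order.TTheory GRing.Theory Num.Theory.
Local Open Scope ring_scope.

Definition dsum_in (V : zmodType) (P : int -> V -> Prop) (K : int -> Prop)
  (x : V) : Prop :=
  exists (s : seq int) (c : int -> V),
    uniq s /\ (forall k, k \in s -> K k) /\ (forall k, P k (c k)) /\
    x = \sum_(k <- s) c k.

Definition graded_dirsum (V : zmodType) (D : V -> Prop) (P : int -> V -> Prop)
  : Prop :=
  (forall n, P n 0 /\ forall x y, P n x -> P n y -> P n (x - y)) /\
  (forall n x, P n x -> D x) /\
  (forall x, D x -> dsum_in P (fun _ => True) x) /\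
  (forall (s : seq int) (c : int -> V), uniq s -> (forall k, P k (c k)) ->
     \sum_(k <- s) c k = 0 -> forall k, k \in s -> c k = 0).

Definition SG_sub (V : zmodType) (P : int -> V -> Prop) (N : V -> Prop) : Prop :=
  forall x, N x -> exists (s : seq int) (c : int -> V),
    uniq s /\ (forall k, P k (c k) /\ N (c k)) /\ x = \sum_(k <- s) c k.

Definition SG_ring (A : nzRingType) (G : int -> A -> Prop) : Prop :=
  graded_dirsum (fun _ => True) G /\
  (forall m n x y, G m x -> G n y -> dsum_in G (fun k => k <= m + n) (x * y)) /\
  G 0 1.

Definition pos_SG_ring (A : nzRingType) (G : int -> A -> Prop) : Prop :=
  SG_ring G /\ (forall n x, n < 0 -> G n x -> x = 0).

Definition left_ideal (A : nzRingType) (I : A -> Prop) : Prop :=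
  I 0 /\ (forall x y, I x -> I y -> I (x - y)) /\ (forall r x, I x -> I (r * x)).

Definition two_sided_ideal (A : nzRingType) (I : A -> Prop) : Prop :=
  left_ideal I /\ (forall r x, I x -> I (x * r)).

Definition SG_ideal (A : nzRingType) (G : int -> A -> Prop) (I : A -> Prop)
  : Prop := two_sided_ideal I /\ SG_sub G I.

Definition R_geq (A : nzRingType) (G : int -> A -> Prop) (t : nat) (x : A)
  : Prop :=
  forall I, SG_ideal G I ->
    (forall y, dsum_in G (fun k => t%:Z <= k) y -> I y) -> I x.

Definition ipow (A : nzRingType) (I : A -> Prop) (n : nat) (x : A) : Prop :=
  match n with
  | 0%N => True
  | _ => exists ss : seq (seq A),
           (forall s, s \in ss -> size s = n /\ forall a, a \in s -> I a) /\
           x = \sum_(s <- ss) \prod_(a <- s) a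
  end.

Definition Rp (A : nzRingType) (G : int -> A -> Prop) (n : int) (r : A) : Prop :=
  G n r /\ forall m h, G m h -> G (n + m) (r * h).
Definition Rpp (A : nzRingType) (G : int -> A -> Prop) (n : int) (r : A) : Prop :=
  Rp G n r /\ forall m h, G m h -> G (n + m) (h * r).
Definition inRp (A : nzRingType) (G : int -> A -> Prop) (r : A) : Prop :=
  exists n, Rp G n r.
Definition inRpp (A : nzRingType) (G : int -> A -> Prop) (r : A) : Prop :=
  exists n, Rpp G n r.

Definition left_noetherian (A : nzRingType) : Prop :=
  forall I : nat -> A -> Prop, (forall n, left_ideal (I n)) ->
    (forall n x, I n x -> I n.+1 x) ->
    exists N, forall n x, (N <= n)%N -> I n x -> I N x.

Definition left_Ore (A : nzRingType) (S : A -> Prop) : Prop :=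
  S 1 /\ (forall a b, S a -> S b -> S (a * b)) /\
  (forall s r, S s -> exists u v, S v /\ u * s = v * r).

Definition good_Ore (A : nzRingType) (G : int -> A -> Prop) (S : A -> Prop)
  : Prop :=
  left_Ore S /\ (forall s, S s -> inRpp G s) /\
  (forall s r, S s -> inRp G r -> exists u v, inRp G u /\ S v /\ u * s = v * r).

Definition schematic (A : nzRingType) (G : int -> A -> Prop) : Prop :=
  pos_SG_ring G /\ left_noetherian A /\
  exists Is : seq (A -> Prop),
    (forall i, (i < size Is)%N ->
       good_Ore G (nth (fun _ => False) Is i) /\
       exists s, nth (fun _ => False) Is i s /\ dsum_in G (fun k => 1 <= k) s) /\
    (forall xs : seq A, size xs = size Is ->
       (forall i, (i < size Is)%N -> nth (fun _ => False) Is i (nth 0 xs i)) ->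
       exists (t m : nat), forall a, ipow (R_geq G t) m a ->
         exists rs : seq A, size rs = size xs /\
           a = \sum_(i < size xs) nth 0 rs i * nth 0 xs i).

(* grading of the quotient ring S = R/J (f : R -> S canonical surjection) *)
Definition img_grading (A B : nzRingType) (f : A -> B) (G : int -> A -> Prop)
  (n : int) (s : B) : Prop := exists r, G n r /\ f r = s.

Definition compatible (A B : nzRingType) (G : int -> A -> Prop) (f : A -> B)
  : Prop :=
  forall s, (exists r, inRp G r /\ f r = s) <-> inRp (img_grading f G) s.

(* Modules: a carrier zmodType with a distinguished subset (the module      *)
(* itself), an action and a grading.                                        *)

Unset Implicit Arguments.

Record modT (A : nzRingType) := ModT {
  mcar : zmodType;
  mdom : mcar -> Prop;
  mact : A -> mcar -> mcar;
  mdeg : int -> mcar -> Prop }.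
Arguments mcar {A} m.
Arguments mdom {A} m _.
Arguments mact {A} m _ _.
Arguments mdeg {A} m _ _.

Definition is_module {A : nzRingType} (M : modT A) : Prop :=
  mdom M 0 /\ (forall x y, mdom M x -> mdom M y -> mdom M (x - y)) /\
  (forall r x, mdom M x -> mdom M (mact M r x)) /\
  (forall r x y, mdom M x -> mdom M y ->
     mact M r (x + y) = mact M r x + mact M r y) /\
  (forall r s x, mdom M x -> mact M (r + s) x = mact M r x + mact M s x) /\
  (forall r s x, mdom M x -> mact M (r * s) x = mact M r (mact M s x)) /\
  (forall x, mdom M x -> mact M 1 x = x).

Definition SG_mod {A : nzRingType} (G : int -> A -> Prop) (M : modT A) : Prop :=
  is_module M /\ graded_dirsum (mdom M) (mdeg M) /\
  (forall m n r x, 0 <= m -> G m r -> mdeg M n x ->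
     dsum_in (mdeg M) (fun k => k <= m + n) (mact M r x)).

Definition LSG_mod {A : nzRingType} (G : int -> A -> Prop) (M : modT A) : Prop :=
  SG_mod G M /\
  (forall n m r x, Rp G n r -> mdeg M m x -> mdeg M (n + m) (mact M r x)).

Definition submod {A : nzRingType} (M : modT A) (N : mcar M -> Prop) : Prop :=
  (forall x, N x -> mdom M x) /\ N 0 /\
  (forall x y, N x -> N y -> N (x - y)) /\ (forall r x, N x -> N (mact M r x)).

Definition SG_submod {A : nzRingType} (M : modT A) (N : mcar M -> Prop) : Prop :=
  submod M N /\ SG_sub (mdeg M) N.

Definition hom_on {A : nzRingType} (M N : modT A) (D : mcar M -> Prop)
  (phi : mcar M -> mcar N) : Prop :=
  (forall x, D x -> mdom N (phi x)) /\
  (forall x y, D x -> D y -> phi (x + y) = phi x + phi y) /\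
  (forall r x, D x -> phi (mact M r x) = mact N r (phi x)) /\
  (forall n x, D x -> mdeg M n x -> mdeg N n (phi x)).

Definition ghom {A : nzRingType} (M N : modT A) (phi : mcar M -> mcar N) : Prop :=
  hom_on M N (mdom M) phi.

Definition torsion {A : nzRingType} (G : int -> A -> Prop) (M : modT A)
  (x : mcar M) : Prop :=
  mdom M x /\ exists (n t : nat), forall a, ipow (R_geq G t) n a -> mact M a x = 0.

Definition quot_torsion {A : nzRingType} (G : int -> A -> Prop) (M : modT A)
  (N : mcar M -> Prop) : Prop :=
  forall x, mdom M x -> exists (n t : nat),
    forall a, ipow (R_geq G t) n a -> N (mact M a x).

Definition T_closed {A : nzRingType} (G : int -> A -> Prop) (E : modT A) : Prop :=
  LSG_mod G E /\
  forall (M : modT A) (N : mcar M -> Prop), LSG_mod G M -> SG_submod M N ->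
    quot_torsion G M N ->
    forall phi : mcar M -> mcar E, hom_on M E N phi ->
      (exists psi, ghom M E psi /\ forall x, N x -> psi x = phi x) /\
      (forall psi1 psi2, ghom M E psi1 -> ghom M E psi2 ->
         (forall x, N x -> psi1 x = phi x) -> (forall x, N x -> psi2 x = phi x) ->
         forall x, mdom M x -> psi1 x = psi2 x).

(* (E, j) is a module of quotients of M : E is T-closed, j : M -> E is       *)
(* homogeneous with kernel T(M) (so E contains M/T(M)) and E/j(M) torsion.  *)
Definition is_Q {A : nzRingType} (G : int -> A -> Prop) (M E : modT A)
  (j : mcar M -> mcar E) : Prop :=
  T_closed G E /\ ghom M E j /\
  (forall x, mdom M x -> (j x = 0 <-> torsion G M x)) /\
  quot_torsion G E (fun e => exists m, mdom M m /\ j m = e).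

Definition fstar {A B : nzRingType} (f : A -> B) (N : modT B) : modT A :=
  @ModT A (mcar N) (mdom N) (fun r x => mact N (f r) x) (mdeg N).

Definition fsh_set {A : nzRingType} (J : A -> Prop) (M : modT A) (x : mcar M)
  : Prop :=
  exists P : mcar M -> Prop, SG_submod M P /\
    (forall r y, J r -> P y -> mact M r y = 0) /\ P x.

(* a preimage under f (S-action on f^!(M) is  (f r) . m := r m) *)
Definition sect {A B : nzRingType} (f : A -> B) (s : B) : A :=
  epsilon (inhabits 0) (fun r => f r = s).

Definition fshriek {A B : nzRingType} (f : A -> B) (J : A -> Prop) (M : modT A)
  : modT B :=
  @ModT B (mcar M) (fsh_set J M) (fun s x => mact M (sect f s) x)
    (fun n x => fsh_set J M x /\ mdeg M n x).

From HB Require Import structures.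
From mathcomp Require Import all_boot all_order all_algebra.
From Stdlib Require Import ClassicalEpsilon.

Set Implicit Arguments.
Unset Strict Implicit.
Unset Printing Implicit Defensive.

Import Order.TTheory GRing.Theory Num.Theory.
Local Open Scope ring_scope.

(* A homogeneous S-linear map N -> f^!(M) is the same as a homogeneous
   R-linear map f_* N -> M, since the image of f_* N in M is an SG submodule
   killed by J.  Such a map extends uniquely along j : f_* N -> Q(f_* N)
   because M is T-closed and the cokernel of j is torsion; this is the
   adjunction, and f^!(M) is T-closed for the same reason, extension problems
   over S being extension problems over R.  For full faithfulness, j is
   injective because the T-closed module N is torsion-free (in a schematic ring
   the homogeneous components of a torsion element are torsion), and Q(f_* N')
   retracts onto N' through f^!(Q(f_* N')): the inverse of j' on j'(N') extends
   to f^!(Q(f_* N')) by T-closedness of N', and this extension inverts j' up to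
   torsion, hence exactly. *)

Lemma big_restrict_subset (T : eqType) (V : nmodType) (s s1 : seq T) (c : T -> V) :
  uniq s -> uniq s1 -> {subset s1 <= s} ->
  \sum_(k <- s) (if k \in s1 then c k else 0) = \sum_(k <- s1) c k.
Proof.
move=> us us1 s1s; rewrite -big_mkcond -big_filter; apply: perm_big.
apply: uniq_perm => [|//|k]; first exact: filter_uniq.
by rewrite mem_filter; case s1k: (k \in s1); rewrite //= s1s.
Qed.

(** * Graded direct sums *)

Section GradedDirsum.
Variables (V : zmodType) (D : V -> Prop) (P : int -> V -> Prop).
Hypothesis dirsumDP : graded_dirsum D P.

Lemma grade0 k : P k 0.
Proof. by case: dirsumDP => [H _]; case: (H k). Qed.

Lemma gradeB k x y : P k x -> P k y -> P k (x - y).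
Proof. by case: dirsumDP => [H _]; case: (H k) => _; apply. Qed.

Lemma gradeD k x y : P k x -> P k y -> P k (x + y).
Proof.
move=> Px Py; rewrite -[y]opprK; apply: gradeB => //.
by rewrite -sub0r; apply: gradeB => //; apply: grade0.
Qed.

Lemma grade_dom k x : P k x -> D x.
Proof. by case: dirsumDP => [_ [H _]]; apply: H. Qed.

Definition decomposition (s : seq int) (c : int -> V) (x : V) :=
  uniq s /\ (forall k, P k (c k)) /\ x = \sum_(k <- s) c k.

Lemma decomposition_unique s1 c1 s2 c2 x :
  decomposition s1 c1 x -> decomposition s2 c2 x ->
  forall k, (if k \in s1 then c1 k else 0) = (if k \in s2 then c2 k else 0).
Proof.
move=> [us1 [Pc1 ->]] [us2 [Pc2 e2]] k.
set s := undup (s1 ++ s2).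
pose d i := (if i \in s1 then c1 i else 0) - (if i \in s2 then c2 i else 0).
have Pd i : P i (d i).
  by apply: gradeB; case: ifP => _; by [apply: Pc1 | apply: Pc2 | apply: grade0].
have sum_d : \sum_(i <- s) d i = 0.
  rewrite sumrB !big_restrict_subset ?undup_uniq ?e2 ?subrr // => i si;
    by rewrite mem_undup mem_cat si ?orbT.
case: dirsumDP => [_ [_ [_ indep]]]; case sk: (k \in s).
  by apply/eqP; rewrite -subr_eq0; apply/eqP; apply: (indep s d (undup_uniq _) Pd sum_d).
by move: sk; rewrite mem_undup mem_cat; do 2!case: (_ \in _).
Qed.

(* [0] when [x] has no decomposition. *)
Definition hcomp (k : int) (x : V) : V :=
  epsilon (inhabits 0) (fun y => P k y /\
    forall s c, decomposition s c x -> y = if k \in s then c k else 0).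

Lemma hcomp_spec k x : P k (hcomp k x) /\
  forall s c, decomposition s c x -> hcomp k x = if k \in s then c k else 0.
Proof.
apply: (epsilon_spec (inhabits 0) (fun y => P k y /\ _)).
have [[s [c dx]]|nodec] := classic (exists s c, decomposition s c x).
  exists (if k \in s then c k else 0); split; last first.
    by move=> s' c' dx'; apply: decomposition_unique dx dx' k.
  by case: ifP => _; [case: dx => _ [] | apply: grade0].
by exists 0; split=> [|s c dx]; [apply: grade0 | case: nodec; exists s, c].
Qed.

Lemma hcompP k x : P k (hcomp k x).
Proof. by case: (hcomp_spec k x). Qed.

Lemma hcompE k s c x : decomposition s c x -> hcomp k x = if k \in s then c k else 0.
Proof. by case: (hcomp_spec k x) => _; apply. Qed.

Lemma hcomp_dom k x : D (hcomp k x).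
Proof. exact: grade_dom (hcompP k x). Qed.

Lemma hcomp_decomp x : D x -> exists s, uniq s /\ x = \sum_(k <- s) hcomp k x /\
  forall k, k \notin s -> hcomp k x = 0.
Proof.
case: dirsumDP => [_ [_ [H _]]] Dx; have [s [c [us [_ [Pc ex]]]]] := H x Dx.
have dx : decomposition s c x by [].
exists s; split=> //; split=> [|k /negbTE sk]; last by rewrite (hcompE k dx) sk.
by rewrite {1}ex; apply: eq_big_seq => k sk; rewrite (hcompE k dx) sk.
Qed.

Lemma hcomp_homog n k x : P n x -> hcomp k x = if k == n then x else 0.
Proof.
move=> Px; have dx : decomposition [:: n] (fun k => if k == n then x else 0) x.
  split=> //; split=> [i|]; last by rewrite big_seq1 eqxx.
  by case: eqP => [->|_] //; apply: grade0.
by rewrite (hcompE k dx) mem_seq1; case: eqP.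
Qed.

Lemma hcompD k x y : D x -> D y -> hcomp k (x + y) = hcomp k x + hcomp k y.
Proof.
move=> Dx Dy; have [s1 [us1 [ex zx]]] := hcomp_decomp Dx.
have [s2 [us2 [ey zy]]] := hcomp_decomp Dy.
set s := undup (s1 ++ s2).
have supp s' z : uniq s' -> {subset s' <= s} -> (forall i, i \notin s' -> hcomp i z = 0) ->
    \sum_(i <- s) hcomp i z = \sum_(i <- s') hcomp i z.
  move=> us' s's zz; rewrite -(big_restrict_subset (hcomp^~ z) (undup_uniq _) us' s's).
  by apply: eq_bigr => i _; case: ifP => // /negbT /zz.
have dxy : decomposition s (fun i => hcomp i x + hcomp i y) (x + y).
  split; first exact: undup_uniq.
  split=> [i|]; first by apply: gradeD; apply: hcompP.
  rewrite big_split /= (supp s1) ?(supp s2) -?ex -?ey // => i si;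
    by rewrite mem_undup mem_cat si ?orbT.
rewrite (hcompE k dxy); case: ifP => // /negbT.
by rewrite mem_undup mem_cat negb_or => /andP [/zx -> /zy ->]; rewrite addr0.
Qed.

Lemma homog_of_hcomp n y : D y -> (forall k, k != n -> hcomp k y = 0) -> P n y.
Proof.
move=> Dy zy; have [s [us [ey zs]]] := hcomp_decomp Dy.
suff -> : y = hcomp n y by apply: hcompP.
rewrite {1}ey; have [sn|sn] := boolP (n \in s).
  by rewrite (bigD1_seq n) //= big1 ?addr0 // => k /zy.
by rewrite zs // big_seq big1 // => k sk; apply: zy; apply: contraTneq sk => ->.
Qed.


Lemma SG_sub_hcomp (N : V -> Prop) k x : SG_sub P N -> N 0 -> N x -> N (hcomp k x).
Proof.
move=> sgN N0 Nx; have [s [c [us [Pc ex]]]] := sgN x Nx.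
have dx : decomposition s c x by split=> //; split=> // i; case: (Pc i).
by rewrite (hcompE k dx); case: ifP => // _; case: (Pc k).
Qed.

Lemma SG_sub_of_hcomp (N : V -> Prop) : (forall x, N x -> D x) ->
  (forall k x, N x -> N (hcomp k x)) -> SG_sub P N.
Proof.
move=> ND Nc x Nx; have [s [us [ex _]]] := hcomp_decomp (ND x Nx).
by exists s, (hcomp^~ x); split=> //; split=> // k; split; [apply: hcompP | apply: Nc].
Qed.

Lemma dsum_in_SG_sub (N : V -> Prop) K x : SG_sub P N -> N 0 -> N x ->
  dsum_in P K x -> dsum_in (fun k y => N y /\ P k y) K x.
Proof.
move=> sgN N0 Nx [s [c [us [Ks [Pc ex]]]]].
have dx : decomposition s c x by [].
exists s, (hcomp^~ x); split=> //; split=> //; split.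
  by move=> k; split; [apply: SG_sub_hcomp | apply: hcompP].
by rewrite {1}ex; apply: eq_big_seq => k sk; rewrite (hcompE k dx) sk.
Qed.

End GradedDirsum.

(** * Modules and homogeneous maps *)

Section ModuleTheory.
Variables (A : nzRingType) (M : modT A).
Hypothesis modM : is_module M.

Lemma mdom0 : mdom M 0.
Proof. by case: modM. Qed.

Lemma mdomB x y : mdom M x -> mdom M y -> mdom M (x - y).
Proof. by case: modM => [_ [H _]]; apply: H. Qed.

Lemma mdomN x : mdom M x -> mdom M (- x).
Proof. by move=> Mx; rewrite -sub0r; apply: mdomB => //; apply: mdom0. Qed.

Lemma mdomD x y : mdom M x -> mdom M y -> mdom M (x + y).
Proof. by move=> Mx My; rewrite -[y]opprK; apply: mdomB => //; apply: mdomN. Qed.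

Lemma mdom_act r x : mdom M x -> mdom M (mact M r x).
Proof. by case: modM => [_ [_ [H _]]]; apply: H. Qed.

Lemma mdom_sum (I : Type) (l : seq I) (F : I -> mcar M) :
  (forall i, mdom M (F i)) -> mdom M (\sum_(i <- l) F i).
Proof.
move=> MF; elim: l => [|i l IH]; first by rewrite big_nil; apply: mdom0.
by rewrite big_cons; apply: mdomD.
Qed.

Lemma mactDr r x y : mdom M x -> mdom M y ->
  mact M r (x + y) = mact M r x + mact M r y.
Proof. by case: modM => [_ [_ [_ [H _]]]]; apply: H. Qed.

Lemma mactDl r s x : mdom M x -> mact M (r + s) x = mact M r x + mact M s x.
Proof. by case: modM => [_ [_ [_ [_ [H _]]]]]; apply: H. Qed.

Lemma mactM r s x : mdom M x -> mact M (r * s) x = mact M r (mact M s x).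
Proof. by case: modM => [_ [_ [_ [_ [_ [H _]]]]]]; apply: H. Qed.

Lemma mact1 x : mdom M x -> mact M 1 x = x.
Proof. by case: modM => [_ [_ [_ [_ [_ [_ H]]]]]]; apply: H. Qed.

Lemma mactr0 r : mact M r 0 = 0.
Proof. by apply: (@addrI _ (mact M r 0)); rewrite -mactDr ?addr0 //; apply: mdom0. Qed.

Lemma mact0r x : mdom M x -> mact M 0 x = 0.
Proof. by move=> Mx; apply: (@addrI _ (mact M 0 x)); rewrite -mactDl // !addr0. Qed.

Lemma mactBr r x y : mdom M x -> mdom M y ->
  mact M r (x - y) = mact M r x - mact M r y.
Proof.
by move=> Mx My; rewrite -[in RHS](subrK y x) (mactDr _ (mdomB Mx My) My) addrK.
Qed.

Lemma mact_sumr (I : Type) (l : seq I) (F : I -> mcar M) r :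
  (forall i, mdom M (F i)) -> mact M r (\sum_(i <- l) F i) = \sum_(i <- l) mact M r (F i).
Proof.
move=> MF; elim: l => [|i l IH]; first by rewrite !big_nil mactr0.
by rewrite !big_cons mactDr ?IH //; apply: mdom_sum.
Qed.

Lemma mact_suml (I : Type) (l : seq I) (F : I -> A) x :
  mdom M x -> mact M (\sum_(i <- l) F i) x = \sum_(i <- l) mact M (F i) x.
Proof.
move=> Mx; elim: l => [|i l IH]; first by rewrite !big_nil mact0r.
by rewrite !big_cons mactDl ?IH.
Qed.

End ModuleTheory.

Section HomTheory.
Variables (A : nzRingType) (M N : modT A) (D : mcar M -> Prop) (phi : mcar M -> mcar N).
Hypothesis homphi : hom_on M N D phi.

Lemma hom_dom x : D x -> mdom N (phi x).
Proof. by case: homphi => [H _]; apply: H. Qed.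

Lemma homD x y : D x -> D y -> phi (x + y) = phi x + phi y.
Proof. by case: homphi => [_ [H _]]; apply: H. Qed.

Lemma hom_act r x : D x -> phi (mact M r x) = mact N r (phi x).
Proof. by case: homphi => [_ [_ [H _]]]; apply: H. Qed.

Lemma hom_deg n x : D x -> mdeg M n x -> mdeg N n (phi x).
Proof. by case: homphi => [_ [_ [_ H]]]; apply: H. Qed.

Hypotheses (D0 : D 0) (DB : forall x y, D x -> D y -> D (x - y)).

Lemma hom0 : phi 0 = 0.
Proof. by apply: (@addrI _ (phi 0)); rewrite -homD // !addr0. Qed.

Lemma homB x y : D x -> D y -> phi (x - y) = phi x - phi y.
Proof. by move=> Dx Dy; rewrite -[in RHS](subrK y x) (homD (DB Dx Dy) Dy) addrK. Qed.

Lemma hom_sum (I : Type) (l : seq I) (F : I -> mcar M) :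
  (forall i, D (F i)) -> phi (\sum_(i <- l) F i) = \sum_(i <- l) phi (F i).
Proof.
have DD x y : D x -> D y -> D (x + y).
  by move=> Dx Dy; rewrite -[y]opprK; apply: DB => //; rewrite -sub0r; apply: DB.
move=> DF; have Dsum l' : D (\sum_(j <- l') F j).
  elim: l' => [|i l' IH]; first by rewrite big_nil.
  by rewrite big_cons; apply: DD; [apply: DF | apply: IH].
elim: l => [|i l IH]; first by rewrite !big_nil hom0.
by rewrite !big_cons homD ?IH.
Qed.

End HomTheory.

Lemma ghom_restrict (A : nzRingType) (M N : modT A) (D : mcar M -> Prop) g :
  (forall x, D x -> mdom M x) -> ghom M N g -> hom_on M N D g.
Proof.
move=> DM [g_dom [gD [g_act g_deg]]].
split=> [x Dx|]; first exact/g_dom/DM.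
split=> [x y Dx Dy|]; first by apply: gD; apply: DM.
by split=> [r x Dx|n x Dx]; [apply: g_act | apply: g_deg]; apply: DM.
Qed.

Lemma ghom_comp (A : nzRingType) (M1 M2 M3 : modT A) g1 g2 :
  ghom M1 M2 g1 -> ghom M2 M3 g2 -> ghom M1 M3 (g2 \o g1).
Proof.
move=> h1 h2; have d1 x := hom_dom h1 (x := x).
split=> [x Mx|]; first by apply: (hom_dom h2); apply: d1.
split=> [x y Mx My|] /=; first by rewrite (homD h1) // (homD h2) //; apply: d1.
split=> [r x Mx|n x Mx Mnx] /=; first by rewrite (hom_act h1) // (hom_act h2) //; apply: d1.
by apply: (hom_deg h2); [apply: d1 | apply: (hom_deg h1)].
Qed.

Definition submodT (A : nzRingType) (M : modT A) (P : mcar M -> Prop) : modT A :=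
  @ModT A (mcar M) P (mact M) (fun n x => P x /\ mdeg M n x).
Arguments submodT {A} M P.

Section LSGModule.
Variables (A : nzRingType) (G : int -> A -> Prop) (M : modT A).
Hypothesis LSG_M : LSG_mod G M.

Lemma LSG_module : is_module M.
Proof. by case: LSG_M => [[]]. Qed.

Lemma LSG_dirsum : graded_dirsum (mdom M) (mdeg M).
Proof. by case: LSG_M => [[_ []]]. Qed.

Lemma LSG_Rp_deg n m r x : Rp G n r -> mdeg M m x -> mdeg M (n + m) (mact M r x).
Proof. by case: LSG_M => _; apply. Qed.

Lemma mdeg_dom n x : mdeg M n x -> mdom M x.
Proof. exact: grade_dom LSG_dirsum n x. Qed.

Lemma LSG_submodT (P : mcar M -> Prop) : SG_submod M P -> LSG_mod G (submodT M P).
Proof.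
have modM := LSG_module; have dsM := LSG_dirsum.
case=> [[PM [P0 [PB Pact]]] sgP]; case: LSG_M => [[_ [_ SG_act]] _].
split; first split.
- do 3!split=> //=.
  split=> [r x y Px Py|]; first by apply: (mactDr modM); apply: PM.
  split=> [r s x Px|]; first by apply: (mactDl modM); apply: PM.
  by split=> [r s x Px|x Px]; [apply: (mactM modM) | apply: (mact1 modM)]; apply: PM.
- split.
  + have [_ [_ [decM indepM]]] := dsM.
    split=> [n|]; first split=> [|x y [Px Mx] [Py My]].
    * by split=> //; apply: (grade0 dsM).
    * by split; [apply: PB | apply: (gradeB dsM)].
    split=> [n x [] //|].
    split=> [x Px|s c us Pc]; last by apply: indepM => // k; case: (Pc k).
    by apply: (dsum_in_SG_sub dsM) => //; apply: decM; apply: PM.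
  + move=> m n r x m0 Gr /= [Px Mx].
    by apply: (dsum_in_SG_sub dsM) => //; [apply: Pact | apply: SG_act].
- by move=> n m r x Rr /= [Px Mx]; split; [apply: Pact | apply: LSG_Rp_deg].
Qed.

End LSGModule.

(** * Torsion and T-closed modules *)

Section IdealPowers.
Variable A : nzRingType.
Implicit Types I : A -> Prop.

Lemma ipow_subset I I' n a : (forall y, I y -> I' y) -> ipow I n a -> ipow I' n a.
Proof.
case: n => //= n II' [ss [Hss ->]]; exists ss; split=> // s ss_s.
by have [sz Is] := Hss s ss_s; split=> // b sb; apply/II'/Is.
Qed.

Lemma prod_mem_left_closed I (s : seq A) : (forall r y, I y -> I (r * y)) ->
  s != [::] -> (forall a, a \in s -> I a) -> I (\prod_(a <- s) a).
Proof.
move=> Il; elim: s => [|x [|y l] IH] // _ Is; rewrite big_cons.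
  by rewrite big_nil mulr1; apply: Is; rewrite mem_head.
by apply: Il; apply: IH => // a al; apply: Is; rewrite in_cons al orbT.
Qed.

(* Merging the last [n' - n + 1] factors of each product into one. *)
Lemma ipow_le I n n' a : (forall r y, I y -> I (r * y)) ->
  (n <= n')%N -> ipow I n' a -> ipow I n a.
Proof.
case: n => // n; case: n' => // n' Il le_nn' /= [ss [Hss ->]].
exists (map (fun s => rcons (take n s) (\prod_(x <- drop n s) x)) ss); split.
  move=> _ /mapP [s ss_s ->]; have [sz Is] := Hss s ss_s; split.
    by rewrite size_rcons size_take sz le_nn'.
  move=> b; rewrite mem_rcons in_cons => /orP [/eqP ->|/mem_take]; last exact: Is.
  apply: prod_mem_left_closed => [//||c /mem_drop]; last exact: Is.
  by rewrite -size_eq0 size_drop sz subn_eq0 -ltnNge le_nn'.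
rewrite big_map; apply: eq_bigr => s _.
by rewrite -cats1 big_cat big_seq1 /= -big_cat cat_take_drop.
Qed.

Lemma ipow_mulr I n a r : (forall r y, I y -> I (y * r)) ->
  ipow I n a -> ipow I n (a * r).
Proof.
move=> Ir; case: n => // n /= [ss [Hss ->]].
pose mul_last s := if s is x :: l then rcons (belast x l) (last x l * r) else [::].
exists (map mul_last ss); split.
  move=> _ /mapP [[|x l] ss_s ->]; have [//= sz Is] := Hss _ ss_s.
  split=> [|b]; first by rewrite size_rcons size_belast.
  rewrite mem_rcons in_cons => /orP [/eqP ->|bl].
    by apply: Ir; apply: Is; rewrite lastI mem_rcons mem_head.
  by apply: Is; rewrite lastI mem_rcons in_cons bl orbT.
rewrite big_map mulr_suml; apply: eq_big_seq => s ss_s.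
have [sz _] := Hss s ss_s; case: s sz {ss_s} => [|x l] // _.
by rewrite /mul_last [in LHS](lastI x l) -!cats1 !big_cat !big_seq1 /= mulrA.
Qed.

Lemma ipow_exp I n b : I b -> ipow I n (b ^+ n).
Proof.
case: n => // n Ib /=; exists [:: nseq n.+1 b]; split.
  move=> s; rewrite mem_seq1 => /eqP ->; split; first by rewrite size_nseq.
  by move=> a; rewrite mem_nseq => /andP [_ /eqP ->].
by rewrite big_seq1 big_nseq; elim: n.+1 => [|k IH]; rewrite ?expr0 //= exprS IH.
Qed.

End IdealPowers.

Section RGeq.
Variables (A : nzRingType) (G : int -> A -> Prop).

Lemma R_geq0 t : R_geq G t 0.
Proof. by move=> I [[[I0 _] _] _]. Qed.

Lemma R_geqB t x y : R_geq G t x -> R_geq G t y -> R_geq G t (x - y).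
Proof.
move=> Rx Ry I sgI It; case: (sgI) => [[[_ [IB _]] _] _].
by apply: IB; [apply: Rx | apply: Ry].
Qed.

Lemma R_geq_mull t r x : R_geq G t x -> R_geq G t (r * x).
Proof. by move=> Rx I sgI It; case: (sgI) => [[[_ [_ Il]] _] _]; apply: Il; apply: Rx. Qed.

Lemma R_geq_mulr t r x : R_geq G t x -> R_geq G t (x * r).
Proof. by move=> Rx I sgI It; case: (sgI) => [[_ Ir] _]; apply: Ir; apply: Rx. Qed.

Lemma R_geq_le t t' x : (t <= t')%N -> R_geq G t' x -> R_geq G t x.
Proof.
move=> le_tt' Rx I sgI It; apply: Rx => // y [s [c [us [Ks dy]]]]; apply: It.
by exists s, c; split=> //; split=> // k /Ks; apply: le_trans; rewrite lez_nat.
Qed.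

Lemma ipow_R_geq_le t t' n n' a : (t <= t')%N -> (n <= n')%N ->
  ipow (R_geq G t') n' a -> ipow (R_geq G t) n a.
Proof.
move=> le_tt' le_nn' /(ipow_le (@R_geq_mull t') le_nn').
by apply: ipow_subset => y; apply: R_geq_le.
Qed.

End RGeq.

Section Torsion.
Variables (A : nzRingType) (G : int -> A -> Prop) (M : modT A).
Hypothesis modM : is_module M.

Lemma torsion0 : torsion G M 0.
Proof. by split; [apply: mdom0 | exists 0%N, 0%N => a _; apply: mactr0]. Qed.

Lemma torsionB x y : torsion G M x -> torsion G M y -> torsion G M (x - y).
Proof.
move=> [Mx [n1 [t1 kx]]] [My [n2 [t2 ky]]]; split; first exact: mdomB.
exists (maxn n1 n2), (maxn t1 t2) => a a_in.
rewrite mactBr // kx ?ky ?subrr //; apply: ipow_R_geq_le a_in;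
  by rewrite ?leq_maxl ?leq_maxr.
Qed.

Lemma torsion_act r x : torsion G M x -> torsion G M (mact M r x).
Proof.
move=> [Mx [n [t kx]]]; split; first exact: mdom_act.
exists n, t => a a_in; rewrite -mactM // kx //.
by apply: ipow_mulr a_in => r' y; apply: R_geq_mulr.
Qed.

End Torsion.

Section TClosed.
Variables (A : nzRingType) (G : int -> A -> Prop).

Lemma zero_SG_submod (M : modT A) : LSG_mod G M -> SG_submod M (fun y => y = 0).
Proof.
move=> LSG_M; have modM := LSG_module LSG_M.
split; first split=> [y ->|]; first exact: mdom0.
  by split=> //; split=> [x y -> ->|r y ->]; rewrite ?subrr ?mactr0.
move=> y ->; exists [::], (fun _ => 0); split=> //; split=> [k|]; last by rewrite big_nil.
by split=> //; apply: (grade0 (LSG_dirsum LSG_M)).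
Qed.

Lemma torsion_SG_submod (M : modT A) : LSG_mod G M ->
  (forall k x, torsion G M x -> torsion G M (hcomp (mdeg M) k x)) ->
  SG_submod M (torsion G M).
Proof.
move=> LSG_M tors_hcomp; have modM := LSG_module LSG_M.
split; last exact: (SG_sub_of_hcomp (LSG_dirsum LSG_M) (fun x => @proj1 _ _) tors_hcomp).
split=> [x []|] //; split; first exact: torsion0.
by split=> [x y|r x]; [apply: torsionB | apply: torsion_act].
Qed.

Lemma T_closed_ext (E M : modT A) (N : mcar E -> Prop) phi :
  T_closed G M -> LSG_mod G E -> SG_submod E N -> quot_torsion G E N ->
  hom_on E M N phi -> exists g, ghom E M g /\ forall x, N x -> g x = phi x.
Proof. by move=> [_ TM] LSG_E sgN qN hphi; case: (TM _ _ LSG_E sgN qN phi hphi). Qed.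

Lemma T_closed_ext_unique (E M : modT A) (N : mcar E -> Prop) g1 g2 :
  T_closed G M -> LSG_mod G E -> SG_submod E N -> quot_torsion G E N ->
  ghom E M g1 -> ghom E M g2 -> (forall x, N x -> g1 x = g2 x) ->
  forall e, mdom E e -> g1 e = g2 e.
Proof.
move=> [_ TM] LSG_E sgN qN hg1 hg2 g12.
have hphi : hom_on E M N g1 by apply: ghom_restrict hg1; case: sgN => [[]].
by case: (TM _ _ LSG_E sgN qN g1 hphi) => _ uniq_ext; apply: uniq_ext => // x /g12.
Qed.

(* The identity and the zero map of [T(E)] into [E] both extend the zero map
   on the submodule [0] of [T(E)], whose quotient is torsion. *)
Lemma T_closed_torsion_free (E : modT A) : T_closed G E ->
  (forall k x, torsion G E x -> torsion G E (hcomp (mdeg E) k x)) ->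
  forall x, torsion G E x -> x = 0.
Proof.
move=> TE tors_hcomp; have LSG_E := proj1 TE; have modE := LSG_module LSG_E.
have LSG_T := LSG_submodT LSG_E (torsion_SG_submod LSG_E tors_hcomp).
have q0 : quot_torsion G (submodT E (torsion G E)) (fun y => y = 0).
  by move=> y /= [_ [n [t ky]]]; exists n, t.
have hid : ghom (submodT E (torsion G E)) E id.
  by split=> [y []|] //; split=> //; split=> // n y _ [].
have h0 : ghom (submodT E (torsion G E)) E (fun _ => 0).
  split=> [y _|]; first exact: mdom0.
  split=> [*|]; first by rewrite addr0.
  by split=> [*|*]; [rewrite mactr0 | apply: (grade0 (LSG_dirsum LSG_E))].
exact: (T_closed_ext_unique TE LSG_T (zero_SG_submod LSG_T) q0 hid h0) => y ->.
Qed.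

End TClosed.

(** * Schematic rings *)

Section Schematic.
Variables (A : nzRingType) (G : int -> A -> Prop).

Lemma Rp_mul n m a b : Rp G n a -> Rp G m b -> Rp G (n + m) (a * b).
Proof.
move=> [Ga Ha] [Gb Hb]; split=> [|k h Gh]; first exact: Ha.
by rewrite -mulrA -addrA; apply: Ha; apply: Hb.
Qed.

Lemma Rp_exp n a k : G 0 1 -> Rp G n a -> Rp G (n * k%:Z) (a ^+ k).
Proof.
move=> G1 Ra; elim: k => [|k IH].
  by rewrite mulr0 expr0; split=> // m h Gh; rewrite mul1r add0r.
by rewrite exprS -addn1 PoszD mulrDr mulr1 addrC; apply: Rp_mul.
Qed.

Lemma Ore_exp (S : A -> Prop) s k : left_Ore S -> S s -> S (s ^+ k).
Proof.
move=> [S1 [SM _]] Ss; elim: k => [|k IH]; first by rewrite expr0.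
by rewrite exprS; apply: SM.
Qed.

(* Multiplication by [a] in [R'_e] shifts every homogeneous component by [e], so
   [a x = 0] is a decomposition of [0] and each shifted component vanishes. *)
Lemma Rp_annihilates_hcomp (M : modT A) e a x k : LSG_mod G M -> Rp G e a ->
  mdom M x -> mact M a x = 0 -> mact M a (hcomp (mdeg M) k x) = 0.
Proof.
move=> LSG_M Ra Mx ax; have modM := LSG_module LSG_M; have dsM := LSG_dirsum LSG_M.
have [s [us [ex zx]]] := hcomp_decomp dsM Mx.
pose c i := mact M a (hcomp (mdeg M) (i - e) x).
have Pc i : mdeg M i (c i).
  by have := LSG_Rp_deg LSG_M Ra (hcompP dsM (i - e) x); rewrite addrC subrK.
have us' : uniq (map (+%R^~ e) s) by rewrite map_inj_uniq // => i j /addIr.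
have sum_c : \sum_(i <- map (+%R^~ e) s) c i = 0.
  rewrite big_map /c; under eq_bigr do rewrite addrK.
  by rewrite -(mact_sumr modM) -?ex // => i; apply: hcomp_dom dsM _ _.
have [sk|/negbTE sk] := boolP (k \in s); last by rewrite zx ?sk ?mactr0.
have [_ [_ [_ indep]]] := dsM.
by have := indep _ _ us' Pc sum_c (k + e); rewrite /c addrK; apply; apply: map_f.
Qed.

Section Graded.
Hypotheses (dsG : graded_dirsum (fun _ => True) G) (G1 : G 0 1).

Lemma Rp0 n : Rp G n 0.
Proof. by split=> [|m h _]; rewrite ?mul0r; apply: grade0 dsG _. Qed.

Lemma Rp_pos_deg d s : Rp G d s -> dsum_in G (fun k => 1 <= k) s ->
  exists2 d', 1 <= d' & Rp G d' s.
Proof.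
move=> Rs [l [c [ul [Kl [Pc ex]]]]].
have dx : decomposition G l c s by [].
have := hcomp_homog dsG d (proj1 Rs); rewrite eqxx (hcompE dsG d dx).
case: ifP => [dl _|_ s0]; first by exists d => //; apply: Kl.
by exists 1 => //; rewrite -s0; apply: Rp0.
Qed.

Lemma R_geq_exp d s t : 1 <= d -> Rp G d s -> R_geq G t (s ^+ t).
Proof.
move=> d_pos Rs I _; apply; have [Gst _] := Rp_exp t G1 Rs.
exists [:: d * t%:Z], (fun k => if k == d * t%:Z then s ^+ t else 0).
split=> //; split=> [k|]; first by rewrite mem_seq1 => /eqP ->; apply: ler_peMl.
split=> [k|]; last by rewrite big_seq1 eqxx.
by case: eqP => [->|_] //; apply: grade0 dsG _.
Qed.

End Graded.

Lemma schematic_dirsum : schematic G -> graded_dirsum (fun _ => True) G.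
Proof. by case=> [[[]]]. Qed.

Lemma schematic_one : schematic G -> G 0 1.
Proof. by case=> [[[_ [_ G1]] _] _]. Qed.

(* Each Ore set of the schematic family contains an element of positive degree
   in [R'']; a power of it kills [y], and these powers generate a left ideal
   containing a power of some [R_{>=t}]. *)
Lemma schematic_torsion (M : modT A) y : schematic G -> is_module M -> mdom M y ->
  (forall d s, 1 <= d -> Rp G d s -> exists k, mact M (s ^+ k) y = 0) ->
  torsion G M y.
Proof.
move=> schG modM My kill; split=> //.
have [_ [_ [Is [OreIs covIs]]]] := schG.
pose Si i := nth (fun _ => False) Is i.
have killSi i : (i < size Is)%N -> exists x, Si i x /\ mact M x y = 0.
  move=> lt_i; have [[OreS [SRpp _]] [s [Ss pos_s]]] := OreIs i lt_i.
  have [d [Rs _]] := SRpp s Ss.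
  have [d' d'_pos Rs'] := Rp_pos_deg (schematic_dirsum schG) Rs pos_s.
  have [k sky] := kill _ _ d'_pos Rs'.
  by exists (s ^+ k); split=> //; apply: Ore_exp OreS Ss.
pose xs := mkseq (fun i => epsilon (inhabits 0) (fun x => Si i x /\ mact M x y = 0))
  (size Is).
have size_xs : size xs = size Is by rewrite size_mkseq.
have xsP i : (i < size Is)%N -> Si i (nth 0 xs i) /\ mact M (nth 0 xs i) y = 0.
  move=> lt_i; rewrite nth_mkseq //.
  exact: (epsilon_spec _ (fun x => Si i x /\ mact M x y = 0) (killSi i lt_i)).
have [t [m cov]] := covIs xs size_xs (fun i lt_i => proj1 (xsP i lt_i)).
exists m, t => a /cov [rs [_ ->]]; rewrite mact_suml //.
by apply: big1 => i _; rewrite mactM // (proj2 (xsP i _)) ?mactr0 // -size_xs.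
Qed.

Lemma torsion_hcomp (M : modT A) k x : schematic G -> LSG_mod G M ->
  torsion G M x -> torsion G M (hcomp (mdeg M) k x).
Proof.
move=> schG LSG_M [Mx [n [t kx]]]; have dsM := LSG_dirsum LSG_M.
apply: schematic_torsion (LSG_module LSG_M) (hcomp_dom dsM k x) _ => // d s d_pos Rs.
exists (t * n)%N; apply: Rp_annihilates_hcomp LSG_M (Rp_exp _ (schematic_one schG) Rs) Mx _.
apply: kx; rewrite exprM; apply: ipow_exp.
exact: (R_geq_exp (schematic_dirsum schG) (schematic_one schG) d_pos Rs).
Qed.

Lemma schematic_T_closed_torsion_free (E : modT A) x : schematic G -> T_closed G E ->
  torsion G E x -> x = 0.
Proof.
move=> schG TE; apply: T_closed_torsion_free => // k y.
exact: torsion_hcomp (proj1 TE).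
Qed.

End Schematic.

(** * Images and sums of SG submodules *)

Section SGSubmodules.
Variables (A : nzRingType) (M1 M : modT A).
Hypotheses (modM1 : is_module M1) (dsM1 : graded_dirsum (mdom M1) (mdeg M1)).
Hypothesis dsM : graded_dirsum (mdom M) (mdeg M).

Lemma hcomp_ghom psi k x : ghom M1 M psi -> mdom M1 x ->
  hcomp (mdeg M) k (psi x) = psi (hcomp (mdeg M1) k x).
Proof.
move=> hpsi M1x; have [s [us [ex zx]]] := hcomp_decomp dsM1 M1x.
have dpsi : decomposition (mdeg M) s (fun i => psi (hcomp (mdeg M1) i x)) (psi x).
  split=> //; split=> [i|].
    by apply: (hom_deg hpsi); [apply: (hcomp_dom dsM1) | apply: (hcompP dsM1)].
  rewrite {1}ex (hom_sum hpsi (mdom0 modM1) (mdomB modM1)) // => i.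
  exact: hcomp_dom dsM1 _ _.
rewrite (hcompE dsM k dpsi); case: ifP => // /negbT /zx ->.
by rewrite (hom0 hpsi (mdom0 modM1)).
Qed.

Lemma image_SG_submod psi : ghom M1 M psi ->
  SG_submod M (fun y => exists x, mdom M1 x /\ psi x = y).
Proof.
move=> hpsi; split.
  split=> [y [x [M1x <-]]|]; first exact: hom_dom hpsi _ M1x.
  split; first by exists 0; split; [apply: mdom0 | apply: hom0 hpsi (mdom0 modM1)].
  split=> [_ _ [x [M1x <-]] [y [M1y <-]]|r _ [x [M1x <-]]].
    by exists (x - y); split; [apply: mdomB | apply: (homB hpsi (mdomB modM1))].
  by exists (mact M1 r x); split; [apply: (mdom_act modM1) | apply: (hom_act hpsi)].
have imM y : (exists x, mdom M1 x /\ psi x = y) -> mdom M y.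
  by move=> [x [M1x <-]]; apply: hom_dom hpsi _ M1x.
apply: (SG_sub_of_hcomp dsM imM) => k _ [x [M1x <-]].
exists (hcomp (mdeg M1) k x); split; first exact: hcomp_dom dsM1 _ _.
by rewrite hcomp_ghom.
Qed.

Lemma ghom_injective_reflects_deg psi n y : ghom M1 M psi ->
  (forall x, mdom M1 x -> psi x = 0 -> x = 0) ->
  mdom M1 y -> mdeg M n (psi y) -> mdeg M1 n y.
Proof.
move=> hpsi psi_inj M1y deg_psi; apply: (homog_of_hcomp dsM1 M1y) => k ne_kn.
apply: psi_inj; first exact: hcomp_dom dsM1 _ _.
by rewrite -(hcomp_ghom k hpsi M1y) (hcomp_homog dsM k deg_psi) (negbTE ne_kn).
Qed.

End SGSubmodules.

Lemma SG_submod_add (A : nzRingType) (M : modT A) P1 P2 :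
  is_module M -> graded_dirsum (mdom M) (mdeg M) ->
  SG_submod M P1 -> SG_submod M P2 ->
  SG_submod M (fun z => exists a b, P1 a /\ P2 b /\ z = a + b).
Proof.
move=> modM dsM [[P1M [P10 [P1B P1act]]] sg1] [[P2M [P20 [P2B P2act]]] sg2].
have sumM z : (exists a b, P1 a /\ P2 b /\ z = a + b) -> mdom M z.
  by move=> [a [b [Pa [Pb ->]]]]; apply: (mdomD modM); [apply: P1M | apply: P2M].
split; last first.
  apply: (SG_sub_of_hcomp dsM sumM) => k _ [a [b [Pa [Pb ->]]]].
  exists (hcomp (mdeg M) k a), (hcomp (mdeg M) k b).
  rewrite (hcompD dsM k (P1M _ Pa) (P2M _ Pb)).
  by split; [|split]; [apply: (SG_sub_hcomp dsM) | apply: (SG_sub_hcomp dsM) |].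
split=> //; split; first by exists 0, 0; rewrite addr0.
split=> [_ _ [a1 [b1 [Pa1 [Pb1 ->]]]] [a2 [b2 [Pa2 [Pb2 ->]]]]|r _ [a [b [Pa [Pb ->]]]]].
  exists (a1 - a2), (b1 - b2).
  by split; [apply: P1B | split; [apply: P2B | rewrite opprD addrACA]].
exists (mact M r a), (mact M r b); split; first exact: P1act.
by split; [apply: P2act | apply: (mactDr modM); [apply: P1M | apply: P2M]].
Qed.

(** * Change of rings along [f : R -> R/J] *)

Section ChangeOfRings.
Variables (R S : nzRingType) (G : int -> R -> Prop) (J : R -> Prop).
Variable f : {rmorphism R -> S}.
Hypotheses (dsG : graded_dirsum (fun _ => True) G) (sgJ : SG_ideal G J).
Hypotheses (f_surj : forall s, exists r, f r = s) (kerf : forall r, f r = 0 <-> J r).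

Local Notation GS := (img_grading f G).

Lemma sectK s : f (sect f s) = s.
Proof. exact: (epsilon_spec (inhabits 0) (fun r => f r = s) (f_surj s)). Qed.

Lemma mact_eq_mod_J (M : modT R) x a b : is_module M -> mdom M x ->
  (forall r, J r -> mact M r x = 0) -> f a = f b -> mact M a x = mact M b x.
Proof.
move=> modM Mx Jx fab; rewrite -[a](subrK b) mactDl // Jx ?add0r //.
by apply/kerf; rewrite rmorphB fab subrr.
Qed.

Definition lift_homog (k : int) (y : S) : R :=
  epsilon (inhabits 0) (fun r => G k r /\ f r = y).

Lemma lift_homogP k y : GS k y -> G k (lift_homog k y) /\ f (lift_homog k y) = y.
Proof. exact: (epsilon_spec (inhabits 0) (fun r => G k r /\ f r = y)). Qed.

(* A relation [sum c_k = 0] in [S] lifts to [sum a_k \in J]; as [J] is graded,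
   every [a_k] lies in [J], so [c_k = f a_k = 0]. *)
Lemma img_dirsum : graded_dirsum (fun _ => True) GS.
Proof.
split=> [n|].
  split=> [|_ _ [a [Ga <-]] [b [Gb <-]]].
    by exists 0; split; [apply: (grade0 dsG) | rewrite rmorph0].
  by exists (a - b); split; [apply: (gradeB dsG) | rewrite rmorphB].
split=> //; split=> [y _|s c us Pc sum_c k sk].
  have [r <-] := f_surj y; have [s [us [er _]]] := hcomp_decomp dsG (x := r) I.
  exists s, (fun k => f (hcomp G k r)); split=> //; split=> //.
  split=> [k|]; first by exists (hcomp G k r); split=> //; apply: (hcompP dsG).
  by rewrite {1}er rmorph_sum.
pose a := \sum_(i <- s) lift_homog i (c i).
have Ja : J a.
  apply/kerf; rewrite rmorph_sum -[RHS]sum_c; apply: eq_bigr => i _.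
  by case: (lift_homogP (Pc i)).
have da : decomposition G s (fun i => lift_homog i (c i)) a.
  by split=> //; split=> // i; case: (lift_homogP (Pc i)).
case: sgJ => [[[J0 _] _] sgJ']; have /kerf := SG_sub_hcomp dsG k sgJ' J0 Ja.
by rewrite (hcompE dsG k da) sk; case: (lift_homogP (Pc k)) => _ ->.
Qed.

Lemma hcomp_img k r : hcomp GS k (f r) = f (hcomp G k r).
Proof.
have [s [us [er zr]]] := hcomp_decomp dsG (x := r) I.
have dfr : decomposition GS s (fun k => f (hcomp G k r)) (f r).
  split=> //; split=> [i|]; last by rewrite {1}er rmorph_sum.
  by exists (hcomp G i r); split=> //; apply: (hcompP dsG).
by rewrite (hcompE img_dirsum k dfr); case: ifP => // /negbT /zr ->; rewrite rmorph0.
Qed.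

Lemma SG_ideal_preim I : SG_ideal GS I -> SG_ideal G (fun r => I (f r)).
Proof.
move=> [[[I0 [IB Il]] Ir] sgI]; split; first split; first split.
- by rewrite rmorph0.
- by split=> [x y Ix Iy|r x Ix]; rewrite ?rmorphB ?rmorphM; [apply: IB | apply: Il].
- by move=> r x Ix; rewrite rmorphM; apply: Ir.
- apply: (SG_sub_of_hcomp dsG) => // k r Ir'.
  by rewrite -hcomp_img; exact: (SG_sub_hcomp img_dirsum k sgI I0 Ir').
Qed.

Lemma SG_ideal_img I : SG_ideal G I -> SG_ideal GS (fun y => exists a, I a /\ f a = y).
Proof.
move=> [[[I0 [IB Il]] Ir] sgI]; split; first split; first split.
- by exists 0; rewrite rmorph0.
- split=> [_ _ [a [Ia <-]] [b [Ib <-]]|s _ [a [Ia <-]]].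
    by exists (a - b); rewrite rmorphB; split=> //; apply: IB.
  by have [r <-] := f_surj s; exists (r * a); rewrite rmorphM; split=> //; apply: Il.
- move=> s _ [a [Ia <-]]; have [r <-] := f_surj s.
  by exists (a * r); rewrite rmorphM; split=> //; apply: Ir.
- apply: (SG_sub_of_hcomp img_dirsum) => // k _ [a [Ia <-]].
  exists (hcomp G k a); rewrite hcomp_img; split=> //.
  exact: (SG_sub_hcomp dsG k sgI I0 Ia).
Qed.

Lemma R_geq_SG_ideal t : SG_ideal G (R_geq G t).
Proof.
split; first split; first split.
- exact: R_geq0.
- by split=> [x y|r x]; [apply: R_geqB | apply: R_geq_mull].
- by move=> r x; apply: R_geq_mulr.
- apply: (SG_sub_of_hcomp dsG) => // k a Ra I sgI It.
  by apply: (SG_sub_hcomp dsG k (proj2 sgI) _ (Ra I sgI It)); case: sgI => [[[]]].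
Qed.

Lemma dsum_in_img K y : dsum_in G K y -> dsum_in GS K (f y).
Proof.
move=> [s [c [us [Ks [Pc ->]]]]]; exists s, (fun k => f (c k)).
by split=> //; split=> //; split=> [k|]; [exists (c k) | rewrite rmorph_sum].
Qed.

Lemma R_geq_img t a : R_geq G t a -> R_geq GS t (f a).
Proof.
move=> Ra I sgI It; apply: (Ra _ (SG_ideal_preim sgI)) => y dy.
exact/It/dsum_in_img.
Qed.

(* [f(R_{>=t})] is an SG ideal of [S] containing every element of degree [>= t]. *)
Lemma R_geq_lift t b : R_geq GS t b -> exists a, R_geq G t a /\ f a = b.
Proof.
move/(_ _ (SG_ideal_img (R_geq_SG_ideal t))); apply.
move=> y [s [c [us [Ks [Pc ->]]]]]; exists (\sum_(i <- s) lift_homog i (c i)).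
split; last by rewrite rmorph_sum; apply: eq_bigr => i _; case: (lift_homogP (Pc i)).
move=> I _; apply; exists s, (fun i => lift_homog i (c i)).
by split=> //; split=> //; split=> // i; case: (lift_homogP (Pc i)).
Qed.

Lemma ipow_img t n a : ipow (R_geq G t) n a -> ipow (R_geq GS t) n (f a).
Proof.
case: n => // n /= [ss [Hss ->]]; exists (map (map f) ss); split.
  move=> _ /mapP [s ss_s ->]; have [sz Rs] := Hss s ss_s.
  by split=> [|_ /mapP [b sb ->]]; [rewrite size_map | apply: R_geq_img; apply: Rs].
by rewrite rmorph_sum big_map; apply: eq_bigr => s _; rewrite rmorph_prod big_map.
Qed.

Lemma ipow_lift t n b : ipow (R_geq GS t) n b -> exists a, ipow (R_geq G t) n a /\ f a = b.
Proof.
case: n => [_|n /= [ss [Hss ->]]]; first by exists (sect f b); rewrite sectK.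
pose lift y := epsilon (inhabits 0) (fun a => R_geq G t a /\ f a = y).
have liftP y : R_geq GS t y -> R_geq G t (lift y) /\ f (lift y) = y.
  by move=> Ry; apply: (epsilon_spec _ (fun a => R_geq G t a /\ _)); apply: R_geq_lift.
exists (\sum_(s <- map (map lift) ss) \prod_(a <- s) a); split.
  exists (map (map lift) ss); split=> // _ /mapP [s ss_s ->].
  have [sz Rs] := Hss s ss_s; split=> [|_ /mapP [y sy ->]]; first by rewrite size_map.
  by case: (liftP y (Rs y sy)).
rewrite rmorph_sum big_map; apply: eq_big_seq => s ss_s.
rewrite rmorph_prod big_map; apply: eq_big_seq => y sy.
by case: (liftP y (proj2 (Hss s ss_s) y sy)).
Qed.

Lemma Rp_img n r : Rp G n r -> Rp GS n (f r).
Proof.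
move=> [Gr Rr]; split=> [|m _ [h [Gh <-]]]; first by exists r.
by exists (r * h); rewrite rmorphM; split=> //; apply: Rr.
Qed.

(* Compatibility gives a preimage in some [R'_n']; if [n' != n] then [s] has
   both degrees [n] and [n'], so [s = 0]. *)
Lemma Rp_img_lift n s : compatible G f -> Rp GS n s -> exists r, Rp G n r /\ f r = s.
Proof.
move=> compat Rs; have [r [[n' Rr] fr]] := proj2 (compat s) (ex_intro _ n Rs).
have [->|ne_nn'] := eqVneq n n'; first by exists r.
exists 0; split; first exact: Rp0.
have := hcomp_homog img_dirsum n (proj1 (Rp_img Rr)).
by rewrite (negbTE ne_nn') fr (hcomp_homog img_dirsum n (proj1 Rs)) eqxx rmorph0.
Qed.

Lemma torsion_fstar (N : modT S) x : torsion GS N x <-> torsion G (fstar f N) x.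
Proof.
split=> [[Nx [n [t kx]]]|[Nx [n [t kx]]]]; split=> //; exists n, t.
  by move=> a /ipow_img; apply: kx.
by move=> b /ipow_lift [a [a_in <-]]; apply: kx.
Qed.

Lemma fstar_module (N : modT S) : is_module N -> is_module (fstar f N).
Proof.
move=> modN; split; first exact: (mdom0 modN).
split=> [x y|]; first exact: (mdomB modN).
split=> [r x|] /=; first exact: (mdom_act modN).
split=> [r x y|] /=; first exact: (mactDr modN).
split=> [r s x Nx|] /=; first by rewrite rmorphD (mactDl modN).
by split=> [r s x Nx|x Nx] /=; rewrite ?rmorphM ?(mactM modN) ?rmorph1 ?(mact1 modN).
Qed.

Lemma fstar_LSG (N : modT S) : LSG_mod GS N -> LSG_mod G (fstar f N).
Proof.
move=> [[modN [dsN SG_act]] LSG_act]; split; first split.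
- exact: fstar_module.
- by split=> // m n r x m0 Gr Nx /=; apply: SG_act => //; exists r.
- by move=> n m r x Rr Nx /=; apply: LSG_act => //; apply: Rp_img.
Qed.

Lemma ghom_fstar (N N' : modT S) h : ghom N N' h -> ghom (fstar f N) (fstar f N') h.
Proof.
move=> [h_dom [hD [h_act h_deg]]].
split; [exact: h_dom | split; [exact: hD | split; [|exact: h_deg]]].
by move=> r; apply: h_act.
Qed.

Lemma T_closed_img_torsion_free (N : modT S) x : schematic G -> T_closed GS N ->
  torsion GS N x -> x = 0.
Proof.
move=> schG TN; apply: T_closed_torsion_free => // k y /torsion_fstar tors_y.
exact/torsion_fstar/(torsion_hcomp k schG (fstar_LSG (proj1 TN))).
Qed.

End ChangeOfRings.

Definition descend (R S : nzRingType) (f : R -> S) (M : modT R) : modT S :=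
  @ModT S (mcar M) (mdom M) (fun s x => mact M (sect f s) x) (mdeg M).

Section Shriek.
Variables (R S : nzRingType) (G : int -> R -> Prop) (J : R -> Prop).
Variable f : {rmorphism R -> S}.
Hypotheses (dsG : graded_dirsum (fun _ => True) G) (sgJ : SG_ideal G J).
Hypotheses (f_surj : forall s, exists r, f r = s) (kerf : forall r, f r = 0 <-> J r).
Hypothesis compat : compatible G f.

Local Notation GS := (img_grading f G).

Lemma descend_LSG (M : modT R) : LSG_mod G M ->
  (forall r x, J r -> mdom M x -> mact M r x = 0) -> LSG_mod GS (descend f M).
Proof.
move=> LSG_M JM; have modM := LSG_module LSG_M; have dsM := LSG_dirsum LSG_M.
have act_f x a b : mdom M x -> f a = f b -> mact M a x = mact M b x.
  by move=> Mx; apply: mact_eq_mod_J => // r Jr; apply: JM.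
have [[_ [_ SG_act]] LSG_act] := LSG_M.
split; first split.
- split; first exact: (mdom0 modM).
  split=> [x y|]; first exact: (mdomB modM).
  split=> [s x|] /=; first exact: (mdom_act modM).
  split=> [s x y|] /=; first exact: (mactDr modM).
  split=> [s s' x Mx|] /=.
    by rewrite -(mactDl modM) //; apply: act_f; rewrite // rmorphD !sectK.
  split=> [s s' x Mx|x Mx] /=.
    by rewrite -(mactM modM) //; apply: act_f; rewrite // rmorphM !sectK.
  by rewrite -[RHS](mact1 modM Mx); apply: act_f; rewrite // rmorph1 sectK.
- split=> // m n s x m0 [r [Gr <-]] Mnx /=.
  rewrite (act_f x _ r) ?sectK //; first exact: SG_act.
  exact: mdeg_dom LSG_M _ _ Mnx.
- move=> n m s x Rs Mmx /=; have [r [Rr <-]] := Rp_img_lift dsG sgJ f_surj kerf compat Rs.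
  by rewrite (act_f x _ r) ?sectK //; [apply: LSG_act | apply: mdeg_dom LSG_M _ _ Mmx].
Qed.

Lemma fsh_dom (M : modT R) y : fsh_set J M y -> mdom M y.
Proof. by move=> [P [[[PM _] _] [_ Py]]]; apply: PM. Qed.

Lemma fsh_annihilated (M : modT R) r y : J r -> fsh_set J M y -> mact M r y = 0.
Proof. by move=> Jr [P [_ [JP Py]]]; apply: JP. Qed.

Lemma fsh_act (M : modT R) r y : fsh_set J M y -> fsh_set J M (mact M r y).
Proof.
move=> [P [sgP [JP Py]]]; exists P; split=> //; split=> //.
by case: sgP => [[_ [_ [_ Pact]]] _]; apply: Pact.
Qed.

Lemma mact_fsh_eq (M : modT R) y a b : is_module M -> fsh_set J M y -> f a = f b ->
  mact M a y = mact M b y.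
Proof.
move=> modM Jy; apply: mact_eq_mod_J => //; first exact: fsh_dom Jy.
by move=> r Jr; apply: fsh_annihilated Jy.
Qed.

(* [fsh_set J M] is a union of SG submodules; it is closed under subtraction
   because the sum of two of them is again one. *)
Lemma fsh_SG_submod (M : modT R) : LSG_mod G M -> SG_submod M (fsh_set J M).
Proof.
move=> LSG_M; have modM := LSG_module LSG_M; have dsM := LSG_dirsum LSG_M.
split; last first.
  apply: (SG_sub_of_hcomp dsM (@fsh_dom M)) => k y [P [sgP [JP Py]]].
  exists P; split=> //; split=> //; apply: (SG_sub_hcomp dsM k (proj2 sgP)) => //.
  by case: sgP => [[_ []]].
split=> [y|]; first exact: fsh_dom.
split.
  exists (fun y => y = 0); split; first exact: zero_SG_submod LSG_M.
  by split=> // r y _ ->; apply: mactr0.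
split=> [x y [P1 [sg1 [J1 P1x]]] [P2 [sg2 [J2 P2y]]]|r y]; last exact: fsh_act.
exists (fun z => exists a b, P1 a /\ P2 b /\ z = a + b).
split; first exact: SG_submod_add.
split=> [r _ Jr [a [b [P1a [P2b ->]]]]|].
  have [[P1M _] _] := sg1; have [[P2M _] _] := sg2.
  rewrite (mactDr modM r (P1M _ P1a) (P2M _ P2b)).
  by rewrite (J1 r a Jr P1a) (J2 r b Jr P2b) addr0.
exists x, (- y); split=> //; split=> //.
by case: sg2 => [[_ [P20 [P2B _]]] _]; rewrite -sub0r; apply: P2B.
Qed.

Lemma fshriek_LSG (M : modT R) : LSG_mod G M -> LSG_mod GS (fshriek f J M).
Proof.
move=> LSG_M; apply: (descend_LSG (LSG_submodT LSG_M (fsh_SG_submod LSG_M))).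
by move=> r y Jr; apply: fsh_annihilated.
Qed.

Lemma hom_on_fshriek (N : modT S) (M : modT R) D h : is_module M ->
  hom_on N (fshriek f J M) D h -> hom_on (fstar f N) M D h.
Proof.
move=> modM hh; split=> [x Dx|]; first exact: fsh_dom (hom_dom hh Dx).
split=> [x y Dx Dy|]; first exact: (homD hh).
split=> [r x Dx|n x Dx /(hom_deg hh Dx) []] //=.
by rewrite (hom_act hh) //= (mact_fsh_eq (b := r) modM (hom_dom hh Dx)) ?sectK.
Qed.

(* [J] acts on [f_* N] by zero, so every image of [f_* N] is annihilated by [J]. *)
Lemma ghom_fstar_fshriek (N : modT S) (M : modT R) psi :
  is_module N -> graded_dirsum (mdom N) (mdeg N) -> graded_dirsum (mdom M) (mdeg M) ->
  ghom (fstar f N) M psi -> ghom N (fshriek f J M) psi.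
Proof.
move=> modN dsN dsM hpsi.
have psiJ x : mdom N x -> fsh_set J M (psi x).
  move=> Nx; exists (fun y => exists x, mdom N x /\ psi x = y).
  split; first exact: (image_SG_submod (fstar_module f modN) dsN dsM hpsi).
  split=> [r _ Jr [x' [Nx' <-]]|]; last by exists x.
  rewrite -(hom_act hpsi) //= (proj2 (kerf r) Jr) (mact0r modN) //.
  exact: hom0 hpsi (mdom0 modN).
split=> [x /psiJ //|]; split=> [x y Nx Ny|]; first exact: (homD hpsi).
split=> [s x Nx|n x Nx Nnx] /=; last by split; [apply: psiJ | apply: (hom_deg hpsi)].
by rewrite -(hom_act hpsi) //= sectK.
Qed.

Lemma fshriek_T_closed (M : modT R) : T_closed G M -> T_closed GS (fshriek f J M).
Proof.
move=> [LSG_M TM]; have modM := LSG_module LSG_M; have dsM := LSG_dirsum LSG_M.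
split; first exact: fshriek_LSG.
move=> N P LSG_N sgP qP phi hphi; have modN := LSG_module LSG_N.
have sgP' : SG_submod (fstar f N) P.
  case: sgP => [[PN [P0 [PB Pact]]] sgP]; split=> //.
  by split=> //; split=> //; split=> // r x Px; apply: Pact.
have qP' : quot_torsion G (fstar f N) P.
  move=> x Nx; have [n [t kx]] := qP x Nx; exists n, t => a.
  by move/(ipow_img dsG sgJ f_surj kerf); apply: kx.
have [[psi [hpsi ext]] uniq_ext] :=
  TM _ _ (fstar_LSG LSG_N) sgP' qP' phi (hom_on_fshriek modM hphi).
split; first by exists psi; split=> //; apply: ghom_fstar_fshriek (LSG_dirsum LSG_N) dsM hpsi.
move=> psi1 psi2 h1 h2; apply: uniq_ext; exact: (hom_on_fshriek modM).
Qed.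

End Shriek.

(** * Modules of quotients *)

Definition partial_inv (A B : nzRingType) (N : modT A) (E : modT B)
  (j : mcar N -> mcar E) (e : mcar E) : mcar N :=
  epsilon (inhabits 0) (fun y => mdom N y /\ j y = e).

Section ModuleOfQuotients.
Variables (R S : nzRingType) (G : int -> R -> Prop) (J : R -> Prop).
Variable f : {rmorphism R -> S}.
Hypotheses (schG : schematic G) (sgJ : SG_ideal G J).
Hypotheses (f_surj : forall s, exists r, f r = s) (kerf : forall r, f r = 0 <-> J r).
Hypothesis compat : compatible G f.

Local Notation GS := (img_grading f G).

Variables (N : modT S) (E : modT R) (j : mcar N -> mcar E).
Hypotheses (TN : T_closed GS N) (QE : is_Q G (fstar f N) E j).

Let dsG : graded_dirsum (fun _ => True) G := schematic_dirsum schG.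
Let modN : is_module N := LSG_module (proj1 TN).
Let dsN : graded_dirsum (mdom N) (mdeg N) := LSG_dirsum (proj1 TN).

Local Notation image_j := (fun e => exists y, mdom N y /\ j y = e).

Lemma Q_T_closed : T_closed G E.
Proof. by case: QE. Qed.

Lemma Q_LSG : LSG_mod G E.
Proof. exact: proj1 Q_T_closed. Qed.

Lemma Q_ghom : ghom (fstar f N) E j.
Proof. by case: QE => [_ []]. Qed.

Lemma Q_quot_torsion : quot_torsion G E image_j.
Proof. by case: QE => [_ [_ []]]. Qed.

Lemma Q_image_SG_submod : SG_submod E image_j.
Proof. exact: (image_SG_submod (fstar_module f modN) dsN (LSG_dirsum Q_LSG) Q_ghom). Qed.

(* [j] kills exactly the torsion of [f_* N], and [N] is torsion-free. *)
Lemma Q_injective x y : mdom N x -> mdom N y -> j x = j y -> x = y.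
Proof.
move=> Nx Ny jxy; apply/eqP; rewrite -subr_eq0; apply/eqP.
have Nxy := mdomB modN Nx Ny; case: QE => [_ [_ [kerj _]]].
apply: (T_closed_img_torsion_free dsG sgJ f_surj kerf schG TN).
apply/(torsion_fstar dsG sgJ f_surj kerf)/(kerj _ Nxy).
by rewrite (homB Q_ghom (mdomB modN)) // jxy subrr.
Qed.

Lemma partial_invK y : mdom N y -> partial_inv j (j y) = y.
Proof.
move=> Ny; have [] : mdom N (partial_inv j (j y)) /\ j (partial_inv j (j y)) = j y.
  by apply: (epsilon_spec _ (fun y' => mdom N y' /\ j y' = j y)); exists y.
by move=> Ny' /Q_injective; apply.
Qed.

Lemma Q_reflects_deg n y : mdom N y -> mdeg E n (j y) -> mdeg N n y.
Proof.
apply: (ghom_injective_reflects_deg (fstar_module f modN) dsN (LSG_dirsum Q_LSG) Q_ghom).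
move=> x Nx jx0; apply: (Q_injective Nx (mdom0 modN)).
by rewrite jx0 (hom0 Q_ghom (mdom0 modN)).
Qed.

Lemma partial_invD e1 e2 : image_j e1 -> image_j e2 ->
  partial_inv j (e1 + e2) = partial_inv j e1 + partial_inv j e2.
Proof.
move=> [y1 [Ny1 <-]] [y2 [Ny2 <-]].
by rewrite -(homD Q_ghom) // !partial_invK //; apply: mdomD.
Qed.

Lemma partial_inv_act r e : image_j e ->
  partial_inv j (mact E r e) = mact N (f r) (partial_inv j e).
Proof.
move=> [y [Ny <-]]; rewrite -(hom_act Q_ghom) // !partial_invK //.
exact: mdom_act.
Qed.

Lemma partial_inv_deg n e : image_j e -> mdeg E n e -> mdeg N n (partial_inv j e).
Proof. by move=> [y [Ny <-]]; rewrite partial_invK //; apply: Q_reflects_deg. Qed.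

Lemma Q_extend (M : modT R) h : T_closed G M -> ghom (fstar f N) M h ->
  exists g, ghom E M g /\ forall x, mdom N x -> g (j x) = h x.
Proof.
move=> TM hh; have hphi : hom_on E M image_j (h \o partial_inv j).
  split=> [_ [y [Ny <-]]|] /=; first by rewrite partial_invK //; apply: (hom_dom hh).
  split=> [e1 e2 je1 je2|] /=.
    rewrite partial_invD // (homD hh) //.
      by case: je1 => [y [Ny <-]]; rewrite partial_invK.
    by case: je2 => [y [Ny <-]]; rewrite partial_invK.
  split=> [r e [y [Ny <-]]|n e [y [Ny <-]] Ejy] /=.
    by rewrite partial_inv_act ?partial_invK //; [apply: (hom_act hh) | exists y].
  by rewrite partial_invK //; apply: (hom_deg hh) => //; apply: Q_reflects_deg.
have [g [hg ext]] := T_closed_ext TM Q_LSG Q_image_SG_submod Q_quot_torsion hphi.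
by exists g; split=> // x Nx; rewrite ext /= ?partial_invK //; exists x.
Qed.

Lemma Q_ext_unique (M : modT R) g1 g2 : T_closed G M -> ghom E M g1 -> ghom E M g2 ->
  (forall x, mdom N x -> g1 (j x) = g2 (j x)) -> forall e, mdom E e -> g1 e = g2 e.
Proof.
move=> TM hg1 hg2 g12.
apply: (T_closed_ext_unique TM Q_LSG Q_image_SG_submod Q_quot_torsion hg1 hg2).
by move=> _ [y [Ny <-]]; apply: g12.
Qed.

Lemma Q_comp_fshriek (M : modT R) g : LSG_mod G M -> ghom E M g ->
  ghom N (fshriek f J M) (g \o j).
Proof.
move=> LSG_M hg; apply: (ghom_fstar_fshriek f_surj kerf modN dsN (LSG_dirsum LSG_M)).
exact: ghom_comp Q_ghom hg.
Qed.

Local Notation fsh_image_j := (fun e => fsh_set J E e /\ image_j e).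

Lemma fsh_image_SG_submod : SG_submod (fshriek f J E) fsh_image_j.
Proof.
have dsE := LSG_dirsum Q_LSG.
have [[FE [F0 [FB Fact]]] sgF] := fsh_SG_submod J Q_LSG.
have [[_ [I0 [IB Iact]]] sgI] := Q_image_SG_submod.
split.
  split=> [e [] //|]; split=> //.
  split=> [e1 e2 [F1 I1] [F2 I2]|s e [Fe Ie]]; first by split; [apply: FB | apply: IB].
  by split; [apply: Fact | apply: Iact].
move=> e [Fe Ie]; have [s [us [ee _]]] := hcomp_decomp dsE (FE e Fe).
exists s, (hcomp (mdeg E) ^~ e); split=> //; split=> // k.
have Fk := SG_sub_hcomp dsE k sgF F0 Fe; have Ik := SG_sub_hcomp dsE k sgI I0 Ie.
by split; [split=> //; apply: (hcompP dsE) | split].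
Qed.

Lemma fsh_image_quot_torsion : quot_torsion GS (fshriek f J E) fsh_image_j.
Proof.
move=> e Fe; have [n [t ke]] := Q_quot_torsion (fsh_dom Fe).
exists n, t => b /(ipow_lift dsG sgJ f_surj kerf) [a [a_in <-]] /=.
rewrite (mact_fsh_eq (b := a) kerf (LSG_module Q_LSG) Fe) ?(sectK f_surj) //.
by split; [apply: fsh_act | apply: ke].
Qed.

(* The inverse of [j] on [j(N)] extends to [f^! E] by T-closedness of [N], and
   [j] after this extension differs from the identity by a torsion element of
   [E], hence not at all. *)
Lemma Q_fshriek_retraction : exists psi, ghom (fshriek f J E) N psi /\
  forall e, fsh_set J E e -> j (psi e) = e.
Proof.
have modE := LSG_module Q_LSG.
have hphi : hom_on (fshriek f J E) N fsh_image_j (partial_inv j).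
  split=> [_ [_ [y [Ny <-]]]|]; first by rewrite partial_invK.
  split=> [e1 e2 [_ I1] [_ I2]|]; first exact: partial_invD.
  split=> [s e [_ Ie]|n e [_ Ie] [_ Ene]] /=; last exact: partial_inv_deg.
  by rewrite partial_inv_act // (sectK f_surj).
have LSG_F := fshriek_LSG dsG sgJ f_surj kerf compat Q_LSG.
have [psi [hpsi ext]] :=
  T_closed_ext TN LSG_F fsh_image_SG_submod fsh_image_quot_torsion hphi.
exists psi; split=> // e Fe; apply/eqP; rewrite -subr_eq0; apply/eqP.
have Npsi := hom_dom hpsi Fe; have Ejpsi := hom_dom Q_ghom Npsi.
apply: (schematic_T_closed_torsion_free schG Q_T_closed); split.
  exact: (mdomB modE Ejpsi (fsh_dom Fe)).
have [n [t ke]] := Q_quot_torsion (fsh_dom Fe).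
exists n, t => a a_in; have [y [Ny jy]] := ke a a_in.
have psi_ae : psi (mact E a e) = y.
  rewrite ext; last by split; [apply: fsh_act | exists y].
  by rewrite -jy partial_invK.
rewrite (mactBr modE a Ejpsi (fsh_dom Fe)) -(hom_act Q_ghom) //=.
rewrite -(hom_act hpsi) //= (mact_fsh_eq (b := a) kerf modE Fe) ?(sectK f_surj) //.
by rewrite psi_ae jy subrr.
Qed.

End ModuleOfQuotients.

Lemma Q_full (R S : nzRingType) (G : int -> R -> Prop) (J : R -> Prop)
  (f : {rmorphism R -> S}) (N N' : modT S) (E E' : modT R)
  (j : mcar N -> mcar E) (j' : mcar N' -> mcar E') g :
  schematic G -> SG_ideal G J ->
  (forall s, exists r, f r = s) -> (forall r, f r = 0 <-> J r) -> compatible G f ->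
  T_closed (img_grading f G) N -> T_closed (img_grading f G) N' ->
  is_Q G (fstar f N) E j -> is_Q G (fstar f N') E' j' -> ghom E E' g ->
  exists h, ghom N N' h /\ forall x, mdom N x -> g (j x) = j' (h x).
Proof.
move=> schG sgJ f_surj kerf compat TN TN' QE QE' hg.
have [psi [hpsi psiK]] := Q_fshriek_retraction schG sgJ f_surj kerf compat TN' QE'.
have hgj := Q_comp_fshriek f_surj kerf TN QE (Q_LSG QE') hg.
exists (psi \o (g \o j)); split; first exact: ghom_comp hgj hpsi.
by move=> x Nx /=; rewrite psiK //; apply: (hom_dom hgj).
Qed.

Theorem mainTheorem11 (R S : nzRingType) (G : int -> R -> Prop) (J : R -> Prop)
  (f : {rmorphism R -> S}) :
  schematic G -> SG_ideal G J ->
  (forall s, exists r, f r = s) -> (forall r, f r = 0 <-> J r) ->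
  compatible G f ->
  (* i^! is well defined : C-R -> C-R/J *)
  (forall M : modT R, T_closed G M -> T_closed (img_grading f G) (fshriek f J M)) /\
  (* i_* is left adjoint to i^! : Hom(Q f_* N, M) ~ Hom(N, f^! M), g |-> g o j *)
  (forall (N : modT S) (E M : modT R) (j : mcar N -> mcar E),
     T_closed (img_grading f G) N -> is_Q G (fstar f N) E j -> T_closed G M ->
     (forall g : mcar E -> mcar M, ghom E M g -> ghom N (fshriek f J M) (g \o j)) /\
     (forall h : mcar N -> mcar M, ghom N (fshriek f J M) h ->
        exists g : mcar E -> mcar M, ghom E M g /\ forall x, mdom N x -> g (j x) = h x) /\
     (forall g1 g2 : mcar E -> mcar M, ghom E M g1 -> ghom E M g2 ->
        (forall x, mdom N x -> g1 (j x) = g2 (j x)) ->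
        forall e, mdom E e -> g1 e = g2 e)) /\
  (* i_* is fully faithful : h |-> Q f_*(h) is a bijection Hom(N,N') -> Hom(E,E') *)
  (forall (N N' : modT S) (E E' : modT R) (j : mcar N -> mcar E) (j' : mcar N' -> mcar E'),
     T_closed (img_grading f G) N -> T_closed (img_grading f G) N' ->
     is_Q G (fstar f N) E j -> is_Q G (fstar f N') E' j' ->
     (forall h : mcar N -> mcar N', ghom N N' h ->
        exists g : mcar E -> mcar E', ghom E E' g /\ forall x, mdom N x -> g (j x) = j' (h x)) /\
     (forall g1 g2 : mcar E -> mcar E', ghom E E' g1 -> ghom E E' g2 ->
        (forall x, mdom N x -> g1 (j x) = g2 (j x)) ->
        forall e, mdom E e -> g1 e = g2 e) /\
     (forall g : mcar E -> mcar E', ghom E E' g ->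
        exists h : mcar N -> mcar N', ghom N N' h /\ forall x, mdom N x -> g (j x) = j' (h x)) /\
     (forall h1 h2 : mcar N -> mcar N', ghom N N' h1 -> ghom N N' h2 ->
        (forall x, mdom N x -> j' (h1 x) = j' (h2 x)) ->
        forall x, mdom N x -> h1 x = h2 x)).
Proof.
move=> schG sgJ f_surj kerf compat; have dsG := schematic_dirsum schG.
split=> [M|]; first exact: (fshriek_T_closed dsG sgJ f_surj kerf compat).
split=> [N E M j TN QE TM | N N' E E' j j' TN TN' QE QE'].
  have modM := LSG_module (proj1 TM).
  split=> [g|]; first exact: (Q_comp_fshriek f_surj kerf TN QE (proj1 TM)).
  split=> [h hh|g1 g2]; last exact: (Q_ext_unique TN QE TM).
  exact: (Q_extend schG sgJ f_surj kerf TN QE TM (hom_on_fshriek f_surj kerf modM hh)).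
have TE' := Q_T_closed QE'.
split=> [h hh|].
  apply: (Q_extend schG sgJ f_surj kerf TN QE TE').
  exact: ghom_comp (ghom_fstar f hh) (Q_ghom QE').
split=> [g1 g2|]; first exact: (Q_ext_unique TN QE TE').
split=> [g|h1 h2 hh1 hh2 jh x Nx].
  exact: (Q_full schG sgJ f_surj kerf compat TN TN' QE QE').
apply: (Q_injective schG sgJ f_surj kerf TN' QE' (hom_dom hh1 Nx) (hom_dom hh2 Nx)).
exact: jh.
Qed.
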